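(* Let $X$ be an antipodal distance-regular graph of diameter $3$ on $n$ vertices. If $X$ is not a cocktail-party graph, then $\mathrm{motion}(X)\geq\frac{1}{13}n$.
   Context: A distance-regular graph of diameter $d$ is a connected graph such that for vertices $v,w$ at distance $i$ the numbers of neighbours of $w$ at distance $i-1,i,i+1$ from $v$ are constants depending only on $i$. It is antipodal if being at distance $d$ or equal is an equivalence relation on vertices. A cocktail-party graph is a regular complete bipartite graph with one perfect matching removed. The motion of a graph is the minimum, over non-identity automorphisms, of the number of vertices not fixed. *)

From mathcomp Require Import all_boot all_fingroup.
Set Implicit Arguments. Unset Strict Implicit. Unset Printing Implicit Defensive.

Section Graphs.
Variables (T : finType) (e : rel T).

Definition simple_graph : Prop := symmetric e /\ irreflexive e.

Definition ball (k : nat) (x : T) : {set T} :=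
  iter k (fun A : {set T} => A :|: [set y | [exists z in A, e z y]]) [set x].

(* graph distance: least k with y in ball k x (equals #|T|.+1 if unreachable) *)
Definition dist (x y : T) : nat :=
  find (fun k => y \in ball k x) (iota 0 #|T|.+1).

Definition connected : Prop := forall x y : T, connect e x y.

Definition has_diameter (d : nat) : Prop :=
  connected /\ (forall x y, dist x y <= d) /\ (exists x y, dist x y = d).

Definition nbrs_at (v w : T) (j : nat) : {set T} :=
  [set u | e w u & dist v u == j].

Definition distance_regular : Prop :=
  connected /\
  exists p : nat -> nat -> nat, forall v w j,
    j \in [:: (dist v w).-1; dist v w; (dist v w).+1] ->
    #|nbrs_at v w j| = p (dist v w) j.

Definition antipodal_rel (d : nat) (x y : T) : bool := (x == y) || (dist x y == d).
Definition antipodal (d : nat) : Prop :=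
  reflexive (antipodal_rel d) /\ symmetric (antipodal_rel d) /\
  transitive (antipodal_rel d).

Definition is_automorphism (s : {perm T}) : Prop :=
  forall x y, e (s x) (s y) = e x y.

Definition moved (s : {perm T}) : nat := #|[set x | s x != x]|.
End Graphs.

(* K_{m,m} minus a perfect matching, on 'I_m * bool *)
Definition crown_rel (m : nat) : rel ('I_m * bool) :=
  fun u v => (u.2 != v.2) && (u.1 != v.1).

Definition is_cocktail_party (T : finType) (e : rel T) : Prop :=
  exists m : nat, exists f : T -> 'I_m * bool,
    bijective f /\ forall x y, e x y = crown_rel (f x) (f y).

From mathcomp Require Import all_boot all_fingroup.
From mathcomp Require Import zify.
Set Implicit Arguments. Unset Strict Implicit. Unset Printing Implicit Defensive.

(* An antipodal distance-regular graph of diameter 3 with valency k is an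
   r-fold cover of the complete graph K_(k+1): its antipodal classes (fibres)
   all have size r, every vertex outside a fibre has exactly one neighbour in
   it, and n = r(k+1).  Let s be a nontrivial automorphism fixing a vertex x
   and moving a neighbour y of x.  Then y and s y are not antipodal, so every
   fixed vertex z, being the neighbour of a unique b in the fibre of y, is a
   common neighbour of the non-antipodal vertices b and s b; hence at most
   r max(lam, mu) vertices are fixed.  This gives motion >= n/13 as soon as
   3 max(lam, mu) <= 2k, which counting arguments provide except when r = 2
   and lam = 0; in that case, layering by the distance to a base vertex shows
   the graph is K_(k+1,k+1) minus a perfect matching. *)


Lemma card_bigcup_le (I T : finType) (B : {set I}) (F : I -> {set T}) :
  #|\bigcup_(i in B) F i| <= \sum_(i in B) #|F i|.
Proof.
elim/big_rec2: _ => [|i n U _ IH]; first by rewrite cards0.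
by apply: leq_trans (leq_of_leqif (leq_card_setU _ _)) _; rewrite leq_add2l.
Qed.

Lemma subset_leq_card_setU (T : finType) (X Y Z : {set T}) :
  X \subset Y :|: Z -> #|X| <= #|Y| + #|Z|.
Proof.
by move=> /subset_leq_card sXYZ; apply: leq_trans sXYZ (leq_of_leqif (leq_card_setU Y Z)).
Qed.

Lemma card2_memE (T : finType) (X : {set T}) a c z : #|X| = 2 ->
  a \in X -> c \in X -> z \in X -> a != c -> z != a -> z = c.
Proof.
move=> X2 aX cX zX ac za.
have : z \in [set a; c].
  suff -> : [set a; c] = X by [].
  apply/eqP; rewrite eqEcard X2 cards2 ac andbT.
  by apply/subsetP => w; rewrite !inE => /orP[]/eqP ->.
by rewrite !inE (negbTE za) => /eqP.
Qed.

Section Graph.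
Variables (T : finType) (e : rel T).
Hypotheses (esymm : symmetric e) (eirr : irreflexive e) (econn : connected e).

Local Notation d := (dist e).

Lemma ballS k x y :
  (y \in ball e k.+1 x) = (y \in ball e k x) || [exists z in ball e k x, e z y].
Proof. by rewrite /ball iterS !inE. Qed.

Lemma ball0 x y : (y \in ball e 0 x) = (y == x).
Proof. by rewrite /ball /= inE. Qed.

Lemma ball_mono k l x : k <= l -> {subset ball e k x <= ball e l x}.
Proof.
move=> /subnKC <-; elim: (l - k) => [|j IH] y; first by rewrite addn0.
by move=> /IH; rewrite addnS ballS => ->.
Qed.

Lemma ball_path x p : path e x p -> last x p \in ball e (size p) x.
Proof.
elim/last_ind: p => [|p z IH]; first by rewrite ball0.
rewrite rcons_path size_rcons last_rcons => /andP[/IH H ez].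
by rewrite ballS; apply/orP; right; apply/existsP; exists (last x p); rewrite H.
Qed.

Lemma ball_card x y : y \in ball e #|T| x.
Proof.
have /connectP [p px ->] := econn x y.
case: (shortenP px) => p' pp' up' _.
apply: (ball_mono _ (ball_path pp')).
by move/card_uniqP: up' => /= H; apply: ltnW; rewrite -H; exact: max_card.
Qed.

Lemma leq_distE x y k : (d x y <= k) = (y \in ball e k x).
Proof.
rewrite /dist; set P := (fun k => y \in ball e k x).
have hasP : has P (iota 0 #|T|.+1).
  by apply/hasP; exists #|T|; [rewrite mem_iota add0n ltnSn | exact: ball_card].
have ltf : find P (iota 0 #|T|.+1) < #|T|.+1.
  by move: hasP; rewrite has_find size_iota.
have Pf := nth_find 0 hasP; rewrite nth_iota // add0n in Pf.
apply/idP/idP => [le|yk]; first exact: ball_mono le _ Pf.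
rewrite leqNgt; apply/negP => lt.
have := before_find 0 lt; rewrite nth_iota; first by rewrite add0n /P yk.
exact: ltn_trans lt ltf.
Qed.

Lemma dist_eq0 x y : (d x y == 0) = (y == x).
Proof. by rewrite -leqn0 leq_distE ball0. Qed.

Lemma distxx x : d x x = 0.
Proof. by apply/eqP; rewrite dist_eq0. Qed.

Lemma leq_distS k x y :
  (d x y <= k.+1) = (d x y <= k) || [exists z, (d x z <= k) && e z y].
Proof.
rewrite leq_distE ballS leq_distE; congr (_ || _).
apply/existsP/existsP => -[z /andP[zb ezy]]; exists z.
  by rewrite leq_distE zb ezy.
by rewrite -leq_distE zb ezy.
Qed.

Lemma dist_eq1 x y : (d x y == 1) = e x y.
Proof.
have le1 : (d x y <= 1) = (y == x) || e x y.
  rewrite leq_distS leqn0 dist_eq0; congr (_ || _).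
  apply/existsP/idP => [[z /andP[]]|exy]; first by rewrite leqn0 dist_eq0 => /eqP ->.
  by exists x; rewrite distxx.
move: (dist_eq0 x y) le1; case: (d x y) => [|[|n]] /=.
- by move=> /esym/eqP -> _; rewrite eirr.
- by move=> /esym/negbT; rewrite eq_sym => /negbTE ->.
- by move=> _ /esym/norP[_ /negbTE ->].
Qed.

Lemma dist_adjr x y z : e y z -> d x z <= (d x y).+1.
Proof.
by move=> eyz; rewrite leq_distS; apply/orP; right; apply/existsP; exists y; rewrite leqnn.
Qed.

Lemma dist_adjl y z w k : e y z -> d z w <= k -> d y w <= k.+1.
Proof.
move=> eyz; elim: k w => [|k IH] w.
  by rewrite leqn0 dist_eq0 => /eqP ->; have /eqP -> : d y z == 1 by rewrite dist_eq1.
rewrite leq_distS => /orP[/IH H|/existsP[u /andP[/IH H euw]]].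
  by rewrite leq_distS H.
by rewrite leq_distS; apply/orP; right; apply/existsP; exists u; rewrite H.
Qed.

Lemma distC x y : d x y = d y x.
Proof.
suff le k a b : d a b <= k -> d b a <= k by apply/eqP; rewrite eqn_leq !(le _ _ _ (leqnn _)).
elim: k a b => [|k IH] a b; first by rewrite !leqn0 !dist_eq0 eq_sym.
rewrite leq_distS => /orP[/IH H|/existsP[z /andP[/IH H ezb]]]; first by rewrite leq_distS H.
by apply: dist_adjl H; rewrite esymm.
Qed.

Lemma dist_prev x y n : d x y = n.+1 -> exists z, e z y /\ d x z = n.
Proof.
move=> dxy; have := leqnn (d x y); rewrite {2}dxy leq_distS {1}dxy ltnn /=.
move=> /existsP[z /andP[zn ezy]]; exists z; split => //.
by apply/eqP; rewrite eqn_leq zn -ltnS -dxy dist_adjr.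
Qed.

Lemma dist_common_nbr x y z : e x z -> e z y -> d x y <= 2.
Proof.
move=> exz ezy; apply: leq_trans (dist_adjr x ezy) _.
by have := dist_adjr x exz; rewrite distxx.
Qed.

Lemma automorphismV (s : {perm T}) : is_automorphism e s -> is_automorphism e s^-1.
Proof. by move=> As x y; rewrite -As !permKV. Qed.

Lemma dist_aut (s : {perm T}) x y : is_automorphism e s -> d (s x) (s y) = d x y.
Proof.
suff le (t : {perm T}) a b k : is_automorphism e t -> d a b <= k -> d (t a) (t b) <= k.
  move=> As; apply/eqP; rewrite eqn_leq le //.
  by have := le _ (s x) (s y) _ (automorphismV As) (leqnn _); rewrite !permK.
move=> At; elim: k b => [|k IH] b; first by rewrite !leqn0 !dist_eq0 => /eqP ->.
rewrite leq_distS => /orP[/IH H|/existsP[z /andP[/IH H ezb]]]; first by rewrite leq_distS H.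
by rewrite leq_distS; apply/orP; right; apply/existsP; exists (t z); rewrite H At ezb.
Qed.

Lemma connected_cut_edge (P : {set T}) a b : a \in P -> b \notin P ->
  exists x y, [/\ x \in P, y \notin P & e x y].
Proof.
have /connectP [q pth ->] := econn a b.
elim: q a pth => [|c q IH] a /=; first by move=> _ ->.
move=> /andP[eac pth] aP lNP.
case cP: (c \in P); first exact: IH pth cP lNP.
by exists a, c; rewrite cP eac.
Qed.

Section AntipodalDRG.
Variable pp : nat -> nat -> nat.
Hypothesis hp : forall v w j, j \in [:: (d v w).-1; d v w; (d v w).+1] ->
  #|nbrs_at e v w j| = pp (d v w) j.
Hypothesis diam3 : forall x y, d x y <= 3.
Variables x0 y0 : T.
Hypothesis dist_x0y0 : d x0 y0 = 3.
Hypothesis antiT : transitive (antipodal_rel e 3).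

Local Notation N x := [set y | e x y].
Local Notation anti := (antipodal_rel e 3).
Local Notation fibre b := [set y | anti b y].
Local Notation k := (pp 0 1).
Local Notation lam := (pp 1 1).
Local Notation mu := (pp 2 1).

Lemma card_common_nbrs x y : d x y <= 2 -> #|N x :&: N y| = pp (d x y) 1.
Proof.
move=> le2; rewrite -hp; first by apply: eq_card => u; rewrite !inE dist_eq1 andbC.
by move: le2; case: (d x y) => [|[|[|]]].
Qed.

Lemma card_nbrs x : #|N x| = k.
Proof. by rewrite -(setIid (N x)) card_common_nbrs distxx. Qed.

Lemma card_common_adj x y : e x y -> #|N x :&: N y| = lam.
Proof. by rewrite -dist_eq1 => /eqP dxy; rewrite card_common_nbrs dxy. Qed.

Lemma card_common_dist2 x y : d x y = 2 -> #|N x :&: N y| = mu.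
Proof. by move=> dxy; rewrite card_common_nbrs dxy. Qed.

Lemma dist_cases x y : [\/ d x y = 0, d x y = 1, d x y = 2 | d x y = 3].
Proof. by have := diam3 x y; case: (d x y) => [|[|[|[|]]]]; constructor. Qed.

Lemma dist2_far_nbr x w : d x w = 2 -> exists u, e w u /\ d x u = 3.
Proof.
have p23 : 0 < pp 2 3.
  have [z [ezy dz]] := dist_prev dist_x0y0.
  rewrite -dz -hp; last by rewrite dz.
  by apply/card_gt0P; exists y0; rewrite !inE ezy dist_x0y0 dz.
move=> dxw; move: p23; rewrite -dxw -hp; last by rewrite dxw.
by move=> /card_gt0P [u]; rewrite !inE dxw => /andP[? /eqP ?]; exists u.
Qed.

Lemma antiC x y : anti x y = anti y x.
Proof. by rewrite /antipodal_rel eq_sym distC. Qed.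

Lemma antixx x : anti x x.
Proof. by rewrite /antipodal_rel eqxx. Qed.

Lemma anti_trans x y z : anti x y -> anti y z -> anti x z.
Proof. exact: antiT. Qed.

Lemma dist3_no_common_nbr x y z : d x y = 3 -> e z x -> e z y -> False.
Proof.
by move=> dxy ezx ezy; have := @dist_common_nbr x y z; rewrite esymm ezx ezy dxy => /(_ isT isT).
Qed.

Lemma anti_common_nbr x y z : anti x y -> e z x -> e z y -> x = y.
Proof.
rewrite /antipodal_rel => /orP[/eqP //|/eqP dxy] ezx ezy.
by case: (dist3_no_common_nbr dxy ezx ezy).
Qed.

Lemma anti_adj x y : e x y -> anti x y = false.
Proof.
move=> exy; rewrite /antipodal_rel; apply/negbTE/norP; split.
  by apply/eqP => xy; move: exy; rewrite xy eirr.
by move: exy; rewrite -dist_eq1 => /eqP ->.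
Qed.

Lemma fibre_nbr x b : ~~ anti b x -> exists y, e x y /\ anti b y.
Proof.
rewrite /antipodal_rel => /norP[nbx nd3].
have [dbx|dbx|dbx|dbx] := dist_cases b x.
- by move/eqP: dbx; rewrite dist_eq0 eq_sym (negbTE nbx).
- by exists b; split; [rewrite -dist_eq1 distC dbx | exact: antixx].
- have [u [exu dbu]] := dist2_far_nbr dbx.
  by exists u; split => //; rewrite /antipodal_rel dbu eqxx orbT.
- by move: nd3; rewrite dbx.
Qed.

Lemma anti_nbr b y z : anti b y -> e y z -> ~~ anti b z.
Proof.
move=> aby eyz; apply/negP => abz.
have ayb : anti y b by rewrite antiC.
by have := anti_trans ayb abz; rewrite anti_adj.
Qed.

Lemma fibre_nbr_uniq b y1 y2 z :
  anti b y1 -> anti b y2 -> e z y1 -> e z y2 -> y1 = y2.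
Proof.
move=> ab1 ab2 ez1 ez2; apply: (anti_common_nbr (z := z)) => //.
by apply: (anti_trans (y := b)); rewrite // antiC.
Qed.

Lemma card_fibre b : #|T| = #|fibre b| * k.+1.
Proof.
rewrite -(cardsC (fibre b)).
have -> : #|~: fibre b| = \sum_(y in fibre b) #|N y|.
  rewrite -sum1_card.
  transitivity (\sum_(z in ~: fibre b) \sum_(y in fibre b) (e z y : nat)).
    apply: eq_bigr => z; rewrite !inE => zC.
    have [y [ezy aby]] := fibre_nbr zC.
    rewrite (bigD1 y) ?inE //= ezy big1 //= => y' /andP[]; rewrite inE => aby' y'y.
    case ezy': (e z y') => //.
    by move: y'y; rewrite (fibre_nbr_uniq aby' aby ezy' ezy) eqxx.
  rewrite exchange_big; apply: eq_bigr => y; rewrite inE => aby.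
  rewrite -sum1_card [RHS]big_mkcond [RHS](bigID (fun z => z \in ~: fibre b)) /=.
  rewrite [X in _ = _ + X]big1 ?addn0 => [|z]; last first.
    rewrite !inE negbK => abz; case eyz : (e y z) => //.
    by have := anti_nbr aby eyz; rewrite abz.
  by apply: eq_bigr => z _; rewrite inE esymm; case: (e y z).
by rewrite (eq_bigr (fun _ => k)) ?sum_nat_const ?mulnS // => y _; rewrite card_nbrs.
Qed.

Lemma card_fibre_eq b c : #|fibre b| = #|fibre c|.
Proof. by apply/eqP; rewrite -(eqn_pmul2r (ltn0Sn k)) -!card_fibre. Qed.

Lemma dist2_not_anti x y : d x y = 2 -> ~~ anti y x.
Proof.
move=> dxy; rewrite /antipodal_rel distC dxy /= orbF; apply/eqP => yx.
by move: dxy; rewrite yx distxx.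
Qed.

Lemma dist2_config x y : d x y = 2 -> exists u v, [/\ e x u, anti y u, e x v & e v y].
Proof.
move=> dxy; have [u [exu ayu]] := fibre_nbr (dist2_not_anti dxy).
have [v [evy dxv]] := dist_prev dxy.
by exists u, v; split => //; rewrite -dist_eq1 dxv.
Qed.

Lemma card_nbrs_off_edge x u : e x u -> #|N x :\: (u |: N u)| + lam + 1 = k.
Proof.
move=> exu; rewrite -(card_nbrs x) -(cardsID (u |: N u) (N x)).
have -> : N x :&: (u |: N u) = u |: (N x :&: N u).
  apply/setP => w; rewrite !inE.
  by case: (eqVneq w u) => [->|]; rewrite ?exu //= andbT.
by rewrite cardsU1 !inE eirr /= card_common_adj //; lia.
Qed.

Lemma common_dist2_sub x y u : d x y = 2 -> e x u -> anti y u ->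
  N x :&: N y \subset N x :\: (u |: N u).
Proof.
move=> dxy exu ayu; apply/subsetP => w; rewrite !inE => /andP[exw eyw].
rewrite exw andbT negb_or; apply/andP; split.
  by apply/eqP => wu; move: ayu; rewrite -wu anti_adj.
apply/negP => euw.
have uy : u = y by apply: (anti_common_nbr (z := w)); rewrite 1?antiC // esymm.
by move: exu; rewrite uy -dist_eq1 dxy.
Qed.

Lemma exists_dist2 : exists x y, d x y = 2.
Proof. by have [y [_ dxy]] := dist_prev dist_x0y0; exists x0, y. Qed.

Lemma mu_lam_lt_k : mu + lam < k.
Proof.
have [x [y dxy]] := exists_dist2.
have [u [v [exu ayu _ _]]] := dist2_config dxy.
have := subset_leq_card (common_dist2_sub dxy exu ayu).
by rewrite card_common_dist2 // => le; have := card_nbrs_off_edge exu; lia.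
Qed.

(* For [d x y = 2], [x ~ u] with [u] antipodal to [y] and [x ~ v ~ y], each of
   the [lam] common neighbours of [x] and [v] is either a common neighbour of
   [u] and [v] other than [x], or lies in [N x :\: (u |: N u)] minus [v]. *)
Lemma lam_le_mu_k : 2 * lam + 3 <= mu + k.
Proof.
have [x [y dxy]] := exists_dist2.
have [u [v [exu ayu exv evy]]] := dist2_config dxy.
have nuv : ~~ e u v.
  apply/negP => euv.
  have uy : u = y by apply: (anti_common_nbr (z := v)); rewrite 1?antiC // esymm.
  by move: exu; rewrite uy -dist_eq1 dxy.
have uv : u != v by apply/eqP => uv; move: ayu; rewrite uv antiC anti_adj.
have duv : d u v = 2.
  have [H|H|H|H] := dist_cases u v => //.
  - by move/eqP: H; rewrite dist_eq0 eq_sym (negbTE uv).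
  - by move/eqP: H; rewrite dist_eq1 (negbTE nuv).
  - by case: (dist3_no_common_nbr H exu exv).
have vS : v \in N x :\: (u |: N u) by rewrite !inE exv (negbTE nuv) eq_sym (negbTE uv).
have xC : x \in N u :&: N v by rewrite !inE [e u x]esymm [e v x]esymm exu exv.
have cover : N x :&: N v \subset ((N u :&: N v) :\ x) :|: ((N x :\: (u |: N u)) :\ v).
  apply/subsetP => w; rewrite !inE => /andP[exw evw].
  have wx : w != x by apply/eqP => wx; move: exw; rewrite wx eirr.
  have wv : w != v by apply/eqP => wv; move: evw; rewrite wv eirr.
  case euw : (e u w); first by rewrite wx evw.
  apply/orP; right; rewrite wv exw andbT /= orbF.
  by apply/eqP => wu; move: nuv; rewrite -wu esymm evw.
move: (subset_leq_card_setU cover) (cardsD1 x (N u :&: N v)) (cardsD1 v (N x :\: (u |: N u))).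
rewrite xC vS card_common_adj // card_common_dist2 //.
by have := card_nbrs_off_edge exu; lia.
Qed.

(* For [d x y = 2], the common neighbours of [x] with two distinct vertices of
   the fibre of [y] are disjoint and avoid [u |: N u] for [x ~ u] in that fibre. *)
Lemma mu_bound_fibre3 : 2 < #|fibre x0| -> 2 * mu + lam < k.
Proof.
move=> r3; have [x [y dxy]] := exists_dist2.
have [u [v [exu ayu _ _]]] := dist2_config dxy.
have : 0 < #|fibre y :\: [set y; u]|.
  rewrite cardsD (card_fibre_eq y x0).
  have := subset_leq_card (subsetIr (fibre y) [set y; u]).
  by rewrite cards2; case: (y != u) => /=; lia.
move=> /card_gt0P [y2]; rewrite !inE negb_or => /andP[/andP[y2y y2u] ayy2].
have ay2u : anti y2 u by apply: (anti_trans (y := y)); rewrite // antiC.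
have dxy2 : d x y2 = 2.
  have [H|H|H|H] := dist_cases x y2 => //.
  - move/eqP: H; rewrite dist_eq0 => /eqP y2x.
    by move: (dist2_not_anti dxy); rewrite -y2x ayy2.
  - move/eqP: H; rewrite dist_eq1 => exy2.
    by move: y2u; rewrite (fibre_nbr_uniq ayy2 ayu exy2 exu) eqxx.
  - have : anti y x by apply: (anti_trans (y := y2)); rewrite // /antipodal_rel distC H eqxx orbT.
    by rewrite (negbTE (dist2_not_anti dxy)).
have disj : [disjoint N x :&: N y & N x :&: N y2].
  rewrite -setI_eq0; apply/eqP/setP => w; rewrite !inE.
  apply/negbTE/negP => /andP[/andP[_ eyw] /andP[_ ey2w]].
  have yy2 : y = y2 by apply: (anti_common_nbr (z := w)); rewrite // esymm.
  by move: y2y; rewrite yy2 eqxx.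
have : #|(N x :&: N y) :|: (N x :&: N y2)| <= #|N x :\: (u |: N u)|.
  by apply: subset_leq_card; rewrite subUset !common_dist2_sub.
have [_] := leq_card_setU (N x :&: N y) (N x :&: N y2).
rewrite disj => /eqP ->; rewrite !card_common_dist2 //.
by have := card_nbrs_off_edge exu; lia.
Qed.

Lemma anti_aut (s : {perm T}) a b :
  is_automorphism e s -> anti (s a) (s b) = anti a b.
Proof. by move=> As; rewrite /antipodal_rel dist_aut // (inj_eq perm_inj). Qed.

Lemma card_common_le b c : ~~ anti b c -> #|N b :&: N c| <= maxn lam mu.
Proof.
rewrite /antipodal_rel negb_or => /andP[cb dbc].
have [H|H|H|H] := dist_cases b c.
- by move/eqP: H; rewrite dist_eq0 eq_sym (negbTE cb).
- by rewrite card_common_adj ?leq_maxl // -dist_eq1 H.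
- by rewrite card_common_dist2 ?leq_maxr.
- by move: dbc; rewrite H.
Qed.

Lemma card_fixed_le (s : {perm T}) : is_automorphism e s -> s != 1%g ->
  #|[set z | s z == z]| <= #|fibre x0| * maxn lam mu.
Proof.
move=> As s1; set F := [set z | s z == z].
have [->|[x0' x0'F]] := set_0Vmem F; first by rewrite cards0.
have [b0 b0F] : exists b, b \notin F.
  apply/existsP; move: s1; apply: contraR; rewrite negb_exists => /forallP fixed.
  by apply/eqP/permP => z; move: (fixed z); rewrite !inE negbK perm1 => /eqP.
have [x [y [xF yF exy]]] := connected_cut_edge x0'F b0F.
move: xF yF; rewrite !inE => /eqP sx sy.
have ny : ~~ anti y (s y).
  apply/negP => ay; move: sy; rewrite -(anti_common_nbr ay exy) ?eqxx //.
  by rewrite -{1}sx As.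
have fix_sub : F \subset \bigcup_(b in fibre y) (N b :&: N (s b)).
  apply/subsetP => z; rewrite inE => /eqP sz.
  have nyz : ~~ anti y z.
    apply/negP => ayz; move: ny; apply/negP/negPn.
    by apply: (anti_trans ayz); rewrite -{1}sz anti_aut // antiC.
  have [b [ezb ayb]] := fibre_nbr nyz.
  apply/bigcupP; exists b; first by rewrite inE.
  by rewrite !inE esymm ezb /= esymm -{1}sz As.
apply: leq_trans (subset_leq_card fix_sub) _.
apply: leq_trans (card_bigcup_le _ _) _.
rewrite (card_fibre_eq x0 y) -sum_nat_const; apply: leq_sum => b; rewrite inE => ayb.
apply: card_common_le; apply/negP => abs; move: ny; apply/negP/negPn.
by apply: (anti_trans ayb); apply: (anti_trans abs); rewrite anti_aut // antiC.
Qed.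

Lemma moved_bound (s : {perm T}) : is_automorphism e s -> s != 1%g ->
  3 * maxn lam mu <= 2 * k -> #|T| <= 13 * moved s.
Proof.
move=> As s1 c_le.
have -> : moved s = #|T| - #|[set z | s z == z]|.
  by rewrite -(cardsC [set z | s z == z]) addKn; apply: eq_card => z; rewrite !inE.
have := card_fixed_le As s1; have := card_fibre x0.
set r := #|fibre x0|; set c := maxn lam mu => cardT cF.
have : r * (13 * c) <= r * (12 * k.+1) by rewrite leq_mul2l; apply/orP; right; lia.
nia.
Qed.

Section TwoFoldCover.
Hypothesis fibre2 : forall b, #|fibre b| = 2.

Definition antipode v := odflt v [pick z | d v z == 3].

Lemma dist_antipode v : d v (antipode v) = 3.
Proof.
rewrite /antipode; case: pickP => [z /eqP //|none].
have : 0 < #|fibre v :\ v| by have := cardsD1 v (fibre v); rewrite fibre2 inE antixx /=; lia.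
move=> /card_gt0P [z]; rewrite !inE => /andP[zv].
by rewrite /antipodal_rel eq_sym (negbTE zv) none.
Qed.

Lemma antipode_uniq v z : d v z = 3 -> z = antipode v.
Proof.
move=> dvz; apply: (card2_memE (a := v) (fibre2 v)); rewrite ?inE ?antixx //.
- by rewrite /antipodal_rel dist_antipode eqxx orbT.
- by rewrite /antipodal_rel dvz eqxx orbT.
- by apply/eqP => va; have := dist_antipode v; rewrite -va distxx.
- by apply/eqP => zv; move: dvz; rewrite zv distxx.
Qed.

Lemma antipodeK : involutive antipode.
Proof. by move=> v; apply/esym/antipode_uniq; rewrite distC dist_antipode. Qed.

Lemma anti_antipodeE v z : anti v z = (z == v) || (z == antipode v).
Proof.
rewrite /antipodal_rel eq_sym; congr (_ || _).
by apply/eqP/eqP => [/antipode_uniq //|->]; exact: dist_antipode.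
Qed.

Lemma anti_antipode v : anti v (antipode v).
Proof. by rewrite anti_antipodeE eqxx orbT. Qed.

Lemma antipode_nbr u w : ~~ anti w u -> ~~ e u w -> e u (antipode w).
Proof.
move=> nawu nuw; have [y [euy awy]] := fibre_nbr nawu.
move: awy; rewrite anti_antipodeE => /orP[]/eqP yE; last by rewrite -yE.
by move: euy; rewrite yE (negbTE nuw).
Qed.

(* The antipodes of the neighbours of [x0] adjacent to neither [u] nor [v]
   (for a triangle [x0 u v]) are distinct common neighbours of [u] and [v]. *)
Lemma lam_bound_fibre2 : 0 < lam -> k < 3 * lam.
Proof.
move=> lam_gt0.
have : 0 < #|N x0| by rewrite card_nbrs; have := mu_lam_lt_k; lia.
move=> /card_gt0P [u]; rewrite inE => exu.
have : 0 < #|N x0 :&: N u| by rewrite card_common_adj.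
move=> /card_gt0P [v]; rewrite !inE => /andP[exv euv].
set S := [set w in N x0 | [&& w != u, w != v, ~~ e u w & ~~ e v w]].
have antipodeS : antipode @: S \subset (N u :&: N v) :\ x0.
  apply/subsetP => _ /imsetP [w + ->]; rewrite !inE => /andP[exw /and4P[wu wv nuw nvw]].
  have nanti z : e x0 z -> w != z -> ~~ anti w z.
    by move=> exz wz; apply: contra wz => awz; rewrite (anti_common_nbr awz exw exz).
  have euA : e u (antipode w) by rewrite antipode_nbr ?nanti // eq_sym.
  have evA : e v (antipode w) by rewrite antipode_nbr ?nanti // eq_sym.
  rewrite euA evA /= andbT; apply/eqP => ax; move: (dist_antipode w); rewrite ax distC.
  by have /eqP -> : d x0 w == 1 by rewrite dist_eq1.
have cS : #|S| < lam.
  rewrite -(card_in_imset (in2W (can_inj antipodeK))) -(card_common_adj euv).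
  rewrite (cardsD1 x0 (N u :&: N v)) !inE [e u x0]esymm [e v x0]esymm exu exv.
  by rewrite ltnS; apply: subset_leq_card.
have cover : N x0 \subset S :|: ((N x0 :&: N u) :|: (N x0 :&: N v)).
  apply/subsetP => w; rewrite !inE => exw; rewrite exw /=.
  case: (eqVneq w u) => [->|wu]; first by rewrite esymm euv orbT.
  case: (eqVneq w v) => [->|wv]; first by rewrite euv orbT.
  by case: (e u w); case: (e v w).
move: (subset_leq_card_setU cover) (leq_of_leqif (leq_card_setU (N x0 :&: N u) (N x0 :&: N v))).
by rewrite card_nbrs !card_common_adj //; lia.
Qed.

Section TriangleFree.
Variable o : T.
Hypothesis lam0 : lam = 0.

Lemma adj_antipode_dist2 v : d o v = 2 -> e o (antipode v).
Proof.
move=> dov; have [w [eow avw]] := fibre_nbr (dist2_not_anti dov).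
move: avw; rewrite anti_antipodeE => /orP[]/eqP wE; last by rewrite -wE.
by move: eow; rewrite wE -dist_eq1 dov.
Qed.

Lemma dist2_adj_antipode v : d o v = 2 -> e v (antipode o).
Proof. by move=> dov; have [u [evu dou]] := dist2_far_nbr dov; rewrite -(antipode_uniq dou). Qed.

Lemma dist_antipode_nbr v : d o v = 1 -> d o (antipode v) = 2.
Proof.
move=> dov; have eov : e o v by rewrite -dist_eq1 dov.
have [H|H|H|H] := dist_cases o (antipode v) => //.
- move/eqP: H; rewrite dist_eq0 => /eqP ao.
  by have := dist_antipode v; rewrite ao distC dov.
- move/eqP: H; rewrite dist_eq1 => eoa.
  have va := fibre_nbr_uniq (antixx v) (anti_antipode v) eov eoa.
  by have := dist_antipode v; rewrite -va distxx.
- have aoa : anti o (antipode v) by rewrite /antipodal_rel H eqxx orbT.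
  have : anti o v by apply: anti_trans aoa _; rewrite antiC anti_antipode.
  by rewrite /antipodal_rel dov orbF => /eqP ov; move: dov; rewrite -ov distxx.
Qed.

Lemma no_edge_same_dist v w : d o v = d o w -> ~~ e v w.
Proof.
move=> dvw; apply/negP => evw.
have no_triangle a b c : e a b -> e a c -> e b c -> False.
  move=> eab eac ebc; have := card_common_adj eab; rewrite lam0 => /eqP.
  by rewrite cards_eq0 => /eqP/setP/(_ c); rewrite !inE eac ebc.
have [H|H|H|H] := dist_cases o v; have H' := H; rewrite dvw in H'.
- move/eqP: H; move/eqP: H'; rewrite !dist_eq0 => /eqP wo /eqP vo.
  by move: evw; rewrite vo wo eirr.
- by move/eqP: H; move/eqP: H'; rewrite !dist_eq1 => eow eov; apply: no_triangle eov eow evw.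
- exact: no_triangle evw (dist2_adj_antipode H) (dist2_adj_antipode H').
- by move: evw; rewrite (antipode_uniq H) (antipode_uniq H') eirr.
Qed.

Lemma odd_dist_adj v w : e v w -> odd (d o v) != odd (d o w).
Proof.
move=> evw; have ewv : e w v by rewrite esymm.
have := dist_adjr o evw; have := dist_adjr o ewv.
have [Hv|Hv|Hv|Hv] := dist_cases o v; have [Hw|Hw|Hw|Hw] := dist_cases o w;
  rewrite ?Hv ?Hw //= => _ _;
  by move: evw; rewrite (negbTE (no_edge_same_dist (etrans Hv (esym Hw)))).
Qed.

Lemma adj_oddE v w : ~~ odd (d o v) -> odd (d o w) -> e v w = (antipode v != w).
Proof.
move=> ov ow.
have [Hv|Hv|Hv|Hv] := dist_cases o v; rewrite ?Hv // in ov;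
  have [Hw|Hw|Hw|Hw] := dist_cases o w; rewrite ?Hw // in ow.
- move/eqP: Hv; rewrite dist_eq0 => /eqP ->.
  have -> : e o w by rewrite -dist_eq1 Hw.
  by apply/esym/eqP => aw; move: (dist_antipode o); rewrite aw Hw.
- move/eqP: Hv; rewrite dist_eq0 => /eqP ->.
  by rewrite -(antipode_uniq Hw) eqxx; apply/negbTE; rewrite -dist_eq1 Hw.
- case: (eqVneq (antipode v) w) => [<-|aw].
    by apply/negbTE/negP => /anti_adj; rewrite anti_antipode.
  have nwv : ~~ anti w v.
    rewrite anti_antipodeE negb_or; apply/andP; split.
      by apply/eqP => vw; move: Hv; rewrite vw Hw.
    by apply/eqP => vaw; move: aw; rewrite vaw antipodeK eqxx.
  have [z [evz awz]] := fibre_nbr nwv.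
  move: awz; rewrite anti_antipodeE => /orP[]/eqP zE; first by rewrite -zE.
  have := dist_antipode_nbr Hw; rewrite -zE => Hz.
  by move: evz; rewrite (negbTE (no_edge_same_dist (etrans Hv (esym Hz)))).
- rewrite (antipode_uniq Hw) (dist2_adj_antipode Hv); apply/esym/eqP => aa.
  have vo : v = o by rewrite -(antipodeK v) aa antipodeK.
  by move: Hv; rewrite vo distxx.
Qed.

Definition odd_layer := [set v | odd (d o v)].

Definition layer_rep v := if odd (d o v) then v else antipode v.

Lemma antipode_odd_layer : antipode o \in odd_layer.
Proof. by rewrite inE dist_antipode. Qed.

Lemma layer_repP v : layer_rep v \in odd_layer.
Proof.
rewrite /layer_rep inE; case ov: (odd (d o v)) => //.
have [H|H|H|H] := dist_cases o v; rewrite H // in ov.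
- by move/eqP: H; rewrite dist_eq0 => /eqP ->; rewrite dist_antipode.
- by have /eqP -> : d o (antipode v) == 1 by rewrite dist_eq1 adj_antipode_dist2.
Qed.

Lemma antipode_notin_odd_layer v : v \in odd_layer -> antipode v \notin odd_layer.
Proof.
rewrite !inE => ov; have [H|H|H|H] := dist_cases o v; rewrite H // in ov.
- by rewrite dist_antipode_nbr.
- by rewrite (antipode_uniq H) antipodeK distxx.
Qed.

(* An antipodal pair lies in layers of different parity; a vertex is labelled
   by its pair and the parity of its layer. *)
Definition crown_label v : 'I_#|odd_layer| * bool :=
  (enum_rank_in antipode_odd_layer (layer_rep v), odd (d o v)).

Lemma crown_label1E v w : ((crown_label v).1 == (crown_label w).1) = (layer_rep v == layer_rep w).
Proof.
rewrite /crown_label /=; apply/eqP/eqP => [|->] //.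
exact: enum_rank_in_inj (layer_repP v) (layer_repP w).
Qed.

Lemma crown_label_inj : injective crown_label.
Proof.
move=> v w [/eqP]; rewrite -[_ == _]/((crown_label v).1 == (crown_label w).1).
rewrite crown_label1E => /eqP + ov; rewrite /layer_rep ov.
by case: (odd (d o w)) => // av; rewrite -(antipodeK v) av antipodeK.
Qed.

Lemma cocktail_party_lam0 : is_cocktail_party e.
Proof.
exists #|odd_layer|, crown_label; split.
  apply: inj_card_bij crown_label_inj _.
  rewrite card_prod card_ord card_bool -(cardsC odd_layer).
  suff : #|odd_layer| <= #|~: odd_layer| by lia.
  rewrite -(card_in_imset (in2W (can_inj antipodeK))).
  apply: subset_leq_card; apply/subsetP => _ /imsetP [v vB ->].
  by rewrite inE antipode_notin_odd_layer.
move=> v w; rewrite /crown_rel crown_label1E /layer_rep /=.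
case ov: (odd (d o v)); case ow: (odd (d o w)) => /=.
- by apply/negbTE/negP => /odd_dist_adj; rewrite ov ow.
- by rewrite esymm (adj_oddE (negbT ow) ov) eq_sym.
- by rewrite (adj_oddE (negbT ov) ow).
- by apply/negbTE/negP => /odd_dist_adj; rewrite ov ow.
Qed.

End TriangleFree.
End TwoFoldCover.

Lemma maxn_lam_mu_bound : ~ is_cocktail_party e -> 3 * maxn lam mu <= 2 * k.
Proof.
move=> not_cp; have := lam_le_mu_k; have := mu_lam_lt_k.
have r_gt1 : 1 < #|fibre x0|.
  rewrite (cardsD1 x0) inE antixx ltnS card_gt0; apply/set0Pn; exists y0.
  rewrite !inE /antipodal_rel dist_x0y0 eqxx orbT andbT.
  by apply/eqP => yx; move: dist_x0y0; rewrite yx distxx.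
case: (ltngtP 2 #|fibre x0|) => [r3|r1|r2]; [by have := mu_bound_fibre3 r3; lia | lia |].
have fibre2 b : #|fibre b| = 2 by rewrite (card_fibre_eq b x0).
have [lam0|lam_gt0] := posnP lam; first by case: not_cp; exact: cocktail_party_lam0 x0 lam0.
by have := lam_bound_fibre2 fibre2 lam_gt0; lia.
Qed.

End AntipodalDRG.

End Graph.

Theorem proposition5p10 (T : finType) (e : rel T) :
  simple_graph e ->
  distance_regular e ->
  has_diameter e 3 ->
  antipodal e 3 ->
  ~ is_cocktail_party e ->
  forall s : {perm T}, is_automorphism e s -> s != 1%g ->
    #|T| <= 13 * moved s.
Proof.
move=> [esymm eirr] [econn [pp hp]] [_ [diam3 [x0 [y0 dx0y0]]]] [_ [_ antiT]] not_cp s As s1.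
apply: (moved_bound esymm eirr econn hp diam3 dx0y0 antiT As s1).
exact: (maxn_lam_mu_bound esymm eirr econn hp diam3 dx0y0 antiT not_cp).
Qed.
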